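(* Let $N=2$, $J=1$, $h_0=[0,1]^{\sf T}$, $h_1=[\cos\tau,z]^{\sf T}$ with $z=\sin\tau\,e^{i\phi_z}$, $\tau\in[0,\pi/2)$, $\phi_z\in[0,2\pi)$, $\sigma_0^2,\sigma_1^2,\sigma_n^2>0$, and $c_1=|c_1|e^{i\phi_c}$ with $|c_1|\le\sigma_0\sigma_1$, $\phi_c\in[0,2\pi)$. Then for every $\lambda\ge0$, \[ w_{\rm RZF}(\lambda)=\begin{bmatrix}-\dfrac{\cos\tau\,[(\sigma_1^2+\lambda)z^*+c_1]}{(\sigma_1^2+\lambda)\cos^2\tau+\sigma_n^2}\\[2mm] 1\end{bmatrix}, \] and \[ \mathrm{MSE}(\lambda)=\frac{|\delta_2|^2(\sigma_1^2\cos^2\tau+\sigma_n^2)}{g(\lambda)^2}-\frac{2\sigma_n^2\delta_1\tan\tau}{g(\lambda)}+\sigma_n^2(\tan^2\tau+1), \] with $g(\lambda):=\lambda\cos^2\tau+\sigma_1^2\cos^2\tau+\sigma_n^2$, $\delta_1:=\sigma_n^2\tan\tau-|c_1|\cos\tau\cos(\phi_c+\phi_z)$, $\delta_2:=\sigma_n^2\tan\tau-|c_1|\cos\tau\,e^{i(\phi_c+\phi_z)}$. Furthermore: (i) if $\delta_2=0$ (which implies $\delta_1=0$), $\mathrm{MSE}(\lambda)=\sigma_n^2(\tan^2\tau+1)$ for all $\lambda\ge0$; (ii) if $\delta_2\ne0$, let $\gamma:=\delta_1\sigma_n^2\tan\tau/|\delta_2|^2$: (a) if $\gamma\le0$ (equivalently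 $\delta_1\tan\tau\le0$), $\mathrm{MSE}(\lambda)$ is decreasing on $[0,\infty)$ and its infimum is $\lim_{\lambda\to\infty}\mathrm{MSE}(\lambda)$ (ZF optimal); (b) if $\gamma\ge1$, $\mathrm{MSE}(\lambda)$ is increasing and is minimized at $\lambda=0$; (c) if $\gamma\in(0,1)$, $\mathrm{MSE}$ is minimized over $[0,\infty)$ by $\lambda=\dfrac{\sigma_1^2\cos^2\tau+\sigma_n^2}{\cos^2\tau}\cdot\dfrac{1-\gamma}{\gamma}>0$.
   Context: Complex single-interference model: $y(k)=s_0(k)h_0+s_1(k)h_1+n(k)\in\mathbb{C}^N$, with zero-mean jointly weakly stationary complex signals $s_0,s_1$, $\sigma_j^2:=E|s_j(k)|^2$, $c_1:=E[s_0^*(k)s_1(k)]$, and noise $n(k)\sim\mathcal{CN}(0,\sigma_n^2I)$ uncorrelated with the signals. $R:=E[y(k)y(k)^{\sf H}]$. For $\lambda\ge0$, $R_\lambda:=R+\lambda h_1h_1^{\sf H}$ and the RZF beamformer is $w_{\rm RZF}(\lambda):=R_\lambda^{-1}h_0/(h_0^{\sf H}R_\lambda^{-1}h_0)$. The MSE of $w$ is $J_{\rm MSE}(w):=E|w^{\sf H}y(k)-s_0(k)|^2$, and $\mathrm{MSE}(\lambda):=J_{\rm MSE}(w_{\rm RZF}(\lambda))$. *)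

From HB Require Import structures.
From mathcomp Require Import all_boot all_order all_algebra.
From mathcomp Require Import all_classical all_reals all_analysis.
From mathcomp Require Import complex.

Set Implicit Arguments.
Unset Strict Implicit.
Unset Printing Implicit Defensive.

Import Order.TTheory GRing.Theory Num.Theory.
Local Open Scope ring_scope.

Definition expi (R : realType) (t : R) : R[i] := (cos t +i* sin t)%C.

Definition sqmod (R : realType) (x : R[i]) : R := complex.Re x ^+ 2 + complex.Im x ^+ 2.

Definition mxH (R : realType) m n (A : 'M[R[i]]_(m, n)) : 'M[R[i]]_(n, m) :=
  (map_mx conjc A)^T.

Definition vec2 (R : realType) (a b : R[i]) : 'cV[R[i]]_(2) :=
  \col_(i < 2) (if val i == 0%N then a else b).

(* Stack x(k) := [s0(k); s1(k); n1(k); n2(k)] in C^4.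
   Its correlation matrix E[x x^H] is determined by the standing assumptions:
   E|s0|^2 = sig0^2, E|s1|^2 = sig1^2, E[s1 conj(s0)] = c1, hence E[s0 conj(s1)] = conj(c1),
   E[n n^H] = sign^2 I, noise uncorrelated with the signals. *)
Definition xcorr (R : realType) (sig0 sig1 sign : R) (c1 : R[i]) : 'M[R[i]]_(4) :=
  \matrix_(i < 4, j < 4)
    match val i, val j with
    | 0, 0 => (sig0 ^+ 2)%:C%C
    | 0, 1 => conjc c1
    | 1, 0 => c1
    | 1, 1 => (sig1 ^+ 2)%:C%C
    | 2, 2 => (sign ^+ 2)%:C%C
    | 3, 3 => (sign ^+ 2)%:C%C
    | _, _ => 0
    end.

(* y(k) = A x(k) with A = [h0 h1 I_2] *)
Definition mixmx (R : realType) (h0 h1 : 'cV[R[i]]_(2)) : 'M[R[i]]_(2, 4) :=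
  \matrix_(i < 2, j < 4)
    match val j with
    | 0 => h0 i 0
    | 1 => h1 i 0
    | 2 => if val i == 0%N then 1 else 0
    | _ => if val i == 1%N then 1 else 0
    end.

(* R = E[y y^H] = A E[x x^H] A^H *)
Definition Rcov (R : realType) (sig0 sig1 sign : R) (c1 : R[i])
  (h0 h1 : 'cV[R[i]]_(2)) : 'M[R[i]]_(2) :=
  mixmx h0 h1 *m xcorr sig0 sig1 sign c1 *m mxH (mixmx h0 h1).

(* J_MSE(w) = E|w^H y - s0|^2 = E|e^H x|^2 = e^H E[x x^H] e,
   with e := A^H w - [1;0;0;0]  (a real number; we take its real part). *)
Definition JMSE (R : realType) (sig0 sig1 sign : R) (c1 : R[i])
  (h0 h1 : 'cV[R[i]]_(2)) (w : 'cV[R[i]]_(2)) : R :=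
  let e := mxH (mixmx h0 h1) *m w - delta_mx 0 0 in
  complex.Re ((mxH e *m xcorr sig0 sig1 sign c1 *m e) 0 0).

Definition Rlam (R : realType) (sig0 sig1 sign : R) (c1 : R[i])
  (h0 h1 : 'cV[R[i]]_(2)) (lam : R) : 'M[R[i]]_(2) :=
  Rcov sig0 sig1 sign c1 h0 h1 + (lam%:C)%C *: (h1 *m mxH h1).

Definition wRZF (R : realType) (sig0 sig1 sign : R) (c1 : R[i])
  (h0 h1 : 'cV[R[i]]_(2)) (lam : R) : 'cV[R[i]]_(2) :=
  let Ri := invmx (Rlam sig0 sig1 sign c1 h0 h1 lam) in
  ((mxH h0 *m Ri *m h0) 0 0)^-1 *: (Ri *m h0).

Definition MSE (R : realType) (sig0 sig1 sign : R) (c1 : R[i])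
  (h0 h1 : 'cV[R[i]]_(2)) (lam : R) : R :=
  JMSE sig0 sig1 sign c1 h0 h1 (wRZF sig0 sig1 sign c1 h0 h1 lam).

From HB Require Import structures.
From mathcomp Require Import all_boot all_order all_algebra.
From mathcomp Require Import all_classical all_reals all_analysis.
From mathcomp Require Import complex.
From mathcomp Require Import ring lra.

Set Implicit Arguments.
Unset Strict Implicit.
Unset Printing Implicit Defensive.

Import Order.TTheory GRing.Theory Num.Theory numFieldNormedType.Exports.
Local Open Scope ring_scope.

(* Write a := sig1^2 + lam.  Since h0 = e2, the matrix R_lam is explicit: its
   (1,1) entry D = a cos^2 tau + sign^2 and its determinant are positive, and
   Cramer's rule gives w_RZF = [-R_lam(1,2)/D; 1].  Substituting into J_MSE,
   with |z| = sin tau, |c1| = r and Re (c1 z) = r sin tau cos (phic + phiz),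
   gives the closed form of MSE.  In the variable u = 1/g(lam), which decreases
   from 1/g(0) to 0, MSE = |delta2|^2 (g(0) u^2 - 2 gam u) + const is a parabola
   with vertex u = gam/g(0); the three cases say where this vertex lies with
   respect to (0, 1/g(0)]. *)

(* Otherwise [Re] and [Im] parse as the projections of numClosedFieldType,
   which R[i] also is. *)
Local Notation Re := complex.Re.
Local Notation Im := complex.Im.

Section ComplexParts.
Variable R : rcfType.
Implicit Types x y : R[i].

Lemma Re_add x y : Re (x + y) = Re x + Re y. Proof. by case: x y => ? ? []. Qed.
Lemma Im_add x y : Im (x + y) = Im x + Im y. Proof. by case: x y => ? ? []. Qed.
Lemma Re_opp x : Re (- x) = - Re x. Proof. by case: x. Qed.
Lemma Im_opp x : Im (- x) = - Im x. Proof. by case: x. Qed.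
Lemma Re_mul x y : Re (x * y) = Re x * Re y - Im x * Im y. Proof. by case: x y => ? ? []. Qed.
Lemma Im_mul x y : Im (x * y) = Re x * Im y + Im x * Re y. Proof. by case: x y => ? ? []. Qed.
Lemma Re_inv x : Re x^-1 = Re x / (Re x ^+ 2 + Im x ^+ 2). Proof. by case: x. Qed.
Lemma Im_inv x : Im x^-1 = - (Im x / (Re x ^+ 2 + Im x ^+ 2)). Proof. by case: x. Qed.
Lemma Re_conjc x : Re x^*%C = Re x. Proof. by case: x. Qed.
Lemma Im_conjc x : Im x^*%C = - Im x. Proof. by case: x. Qed.

Lemma complex_ext x y : Re x = Re y -> Im x = Im y -> x = y.
Proof. by case: x y => ? ? [] /= ? ? -> ->. Qed.

End ComplexParts.

Ltac simp_parts := rewrite /= ?(Re_add, Im_add, Re_opp, Im_opp, Re_mul, Im_mul, Re_inv, Im_inv, Re_conjc, Im_conjc) /=.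
Ltac eq_by_parts := apply: complex_ext; simp_parts.

Section Sqmod.
Context {R : realType}.
Implicit Types x y : R[i].

Lemma sqmod_ge0 x : 0 <= sqmod x.
Proof. by rewrite addr_ge0 ?sqr_ge0. Qed.

Lemma sqr_Re_mul_le x y : Re (x * y) ^+ 2 <= sqmod x * sqmod y.
Proof.
rewrite /sqmod Re_mul; set Y := Re x * Im y + Im x * Re y.
have -> : (Re x ^+ 2 + Im x ^+ 2) * (Re y ^+ 2 + Im y ^+ 2)
          = (Re x * Re y - Im x * Im y) ^+ 2 + Y ^+ 2 by rewrite /Y; ring.
by rewrite lerDl sqr_ge0.
Qed.

Lemma sqmod_gt0 x : x != 0 -> 0 < sqmod x.
Proof.
case: x => a b nz; rewrite lt_def sqmod_ge0 andbT /sqmod /=.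
by rewrite paddr_eq0 ?sqr_ge0 // !sqrf_eq0; apply: contra nz => /andP[/eqP-> /eqP->].
Qed.

End Sqmod.

Section Expi.
Variable R : realType.
Implicit Types a b t : R.

Lemma expiD a b : expi a * expi b = expi (a + b).
Proof. by rewrite /expi cosD sinD; eq_by_parts; ring. Qed.

Lemma sqmod_real_expi a t : sqmod (a%:C * expi t)%C = a ^+ 2.
Proof.
rewrite /sqmod /expi; simp_parts; rewrite !mul0r subr0 addr0 !exprMn -mulrDr.
by rewrite cos2Dsin2 mulr1.
Qed.

Lemma Re_real_expi a t : Re (a%:C * expi t)%C = a * cos t.
Proof. by rewrite Re_mul /= mul0r subr0. Qed.

Lemma sqmod_sub_real_expi a b t :
  sqmod (a%:C - b%:C * expi t)%C = a ^+ 2 - 2 * a * b * cos t + b ^+ 2.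
Proof.
rewrite /sqmod /expi; simp_parts.
suff -> : b ^+ 2 = b ^+ 2 * (cos t ^+ 2 + sin t ^+ 2) by ring.
by rewrite cos2Dsin2 mulr1.
Qed.

End Expi.

Lemma add_ge0_of_sqr_le_mul (R : realFieldType) (p q x : R) :
  0 <= p -> 0 <= q -> x ^+ 2 <= p * q -> 0 <= p + q + 2 * x.
Proof.
move=> p_ge0 q_ge0 xpq.
have amgm : 4 * (p * q) <= (p + q) ^+ 2.
  by rewrite -subr_ge0 (_ : _ - _ = (p - q) ^+ 2) ?sqr_ge0 //; ring.
nra.
Qed.

Lemma det_mx22 (R : comPzRingType) (A : 'M[R]_2) :
  \det A = A 0 0 * A 1 1 - A 0 1 * A 1 0.
Proof.
rewrite (expand_det_row _ 0) !big_ord_recr big_ord0 /= add0r /cofactor !det_mx11 !mxE /=.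
rewrite !expr0 expr1 mul1r mulN1r mulrN.
by congr (A _ _ * A _ _ - A _ _ * A _ _); apply: val_inj.
Qed.

Lemma ord2P (i : 'I_2) : i = 0 \/ i = 1.
Proof. by case: i => [[|[|//]] ?]; [left|right]; apply: val_inj. Qed.

Lemma sum_ord2 (V : nmodType) (F : 'I_2 -> V) : \sum_(k < 2) F k = F 0 + F 1.
Proof. by rewrite !big_ord_recr big_ord0 /= add0r; congr (F _ + F _); apply: val_inj. Qed.

Lemma capon_vec2_01 (R : realType) (M : 'M[R[i]]_2) :
  \det M != 0 -> M 0 0 != 0 ->
  ((mxH (vec2 0 1) *m invmx M *m vec2 0 1) 0 0)^-1 *: (invmx M *m vec2 0 1)
  = vec2 (- (M 0 1 / M 0 0)) 1.
Proof.
move=> detM0 M00.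
have adjE : M *m vec2 (- M 0 1) (M 0 0) = \det M *: vec2 0 1.
  apply/matrixP => i j; rewrite (ord1 j) !mxE sum_ord2 !mxE /= det_mx22.
  by case: (ord2P i) => -> /=; ring.
have invE : invmx M *m vec2 0 1 = (\det M)^-1 *: vec2 (- M 0 1) (M 0 0).
  have Mu : M \in unitmx by rewrite unitmxE unitfE.
  have := mulKmx Mu (vec2 (- M 0 1) (M 0 0)).
  by rewrite adjE -scalemxAr => <-; rewrite scalerA mulVf // scale1r.
rewrite -mulmxA invE -scalemxAr !mxE sum_ord2 !mxE /= oppr0.
rewrite -[(0 +i* 0)%C]/(0 : R[i]) -[(1 +i* 0)%C]/(1 : R[i]) mul0r add0r mul1r scalerA.
apply/matrixP => i j; rewrite (ord1 j) !mxE.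
by case: (ord2P i) => -> /=; field; apply/andP.
Qed.

Section RZFModel.
Variables (R : realType) (s0 s1 sn c : R) (z c1 : R[i]).
Local Notation h0 := (vec2 0 1 : 'cV[R[i]]_2).
Local Notation h1 := (vec2 c%:C%C z).
Local Notation Rl := (Rlam s0 s1 sn c1 h0 h1).

Ltac unfold_model := rewrite /Rlam /Rcov /JMSE /mixmx /xcorr /mxH /vec2;
  rewrite !(mxE, big_ord_recr, big_ord0) /=.

Lemma Rlam_model00 (lam : R) : Rl lam 0 0 = (((s1 ^+ 2 + lam) * c ^+ 2 + sn ^+ 2)%:C)%C.
Proof. by case: z c1 => ? ? [? ?]; unfold_model; eq_by_parts; ring. Qed.

Lemma Rlam_model01 (lam : R) : Rl lam 0 1 = c%:C%C * ((s1 ^+ 2 + lam)%:C * z^* + c1)%C.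
Proof. by case: z c1 => ? ? [? ?]; unfold_model; eq_by_parts; ring. Qed.

Lemma Rlam_model10 (lam : R) : Rl lam 1 0 = c%:C%C * ((s1 ^+ 2 + lam)%:C * z + c1^*)%C.
Proof. by case: z c1 => ? ? [? ?]; unfold_model; eq_by_parts; ring. Qed.

Lemma Rlam_model11 (lam : R) :
  Rl lam 1 1 = ((s0 ^+ 2 + (s1 ^+ 2 + lam) * sqmod z + 2 * Re (c1 * z) + sn ^+ 2)%:C)%C.
Proof. by case: z c1 => ? ? [? ?]; unfold_model; eq_by_parts; rewrite /sqmod /=; ring. Qed.

Lemma det_Rlam_model (lam : R) : \det (Rl lam) =
  ((c ^+ 2 * ((s1 ^+ 2 + lam) * s0 ^+ 2 - sqmod c1)
    + sn ^+ 2 * ((s1 ^+ 2 + lam) * (c ^+ 2 + sqmod z) + s0 ^+ 2 + 2 * Re (c1 * z) + sn ^+ 2))%:C)%C.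
Proof.
rewrite det_mx22 Rlam_model00 Rlam_model01 Rlam_model10 Rlam_model11.
by case: z c1 => ? ? [? ?]; eq_by_parts; rewrite /sqmod /=; ring.
Qed.

Hypotheses (sn_gt0 : 0 < sn) (c1_le : sqmod c1 <= (s0 * s1) ^+ 2).

Lemma rzf_denom_gt0 (lam : R) : 0 <= lam -> 0 < (s1 ^+ 2 + lam) * c ^+ 2 + sn ^+ 2.
Proof.
move=> lam_ge0; apply: ltr_wpDl; last exact: exprn_gt0.
by rewrite mulr_ge0 ?sqr_ge0 // addr_ge0 ?sqr_ge0.
Qed.

Lemma det_Rlam_model_neq0 (lam : R) : 0 <= lam -> \det (Rl lam) != 0.
Proof.
move=> lam_ge0; rewrite det_Rlam_model fmorph_eq0 gt_eqF //.
set a := s1 ^+ 2 + lam; set P := sqmod z; set Q := sqmod c1; set X := Re (c1 * z).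
have a_ge : s1 ^+ 2 <= a by rewrite lerDl.
have a_ge0 : 0 <= a by rewrite addr_ge0 ?sqr_ge0.
have P_ge0 : 0 <= P by apply: sqmod_ge0.
have Q_le : Q <= s0 ^+ 2 * a.
  by apply: (le_trans c1_le); rewrite exprMn ler_wpM2l ?sqr_ge0.
have cross_ge0 : 0 <= s0 ^+ 2 + a * P + 2 * X.
  apply: add_ge0_of_sqr_le_mul; first exact: sqr_ge0.
    exact: mulr_ge0.
  have := sqr_Re_mul_le c1 z; rewrite -/P -/Q -/X => XQP.
  by apply: le_trans XQP _; rewrite mulrA ler_wpM2r.
apply: ltr_wpDl.
  by apply: mulr_ge0; rewrite ?sqr_ge0 // subr_ge0 mulrC.
apply: mulr_gt0; first exact: exprn_gt0.
have : 0 <= a * c ^+ 2 by rewrite mulr_ge0 ?sqr_ge0.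
have := exprn_gt0 2 sn_gt0; lra.
Qed.

Lemma wRZF_model (lam : R) : 0 <= lam ->
  wRZF s0 s1 sn c1 h0 h1 lam
  = vec2 (- ((c%:C * ((s1 ^+ 2 + lam)%:C * z^* + c1))
             / ((s1 ^+ 2 + lam) * c ^+ 2 + sn ^+ 2)%:C))%C 1.
Proof.
move=> lam_ge0; rewrite /wRZF capon_vec2_01 ?det_Rlam_model_neq0 //.
  by rewrite Rlam_model00 Rlam_model01.
by rewrite Rlam_model00 fmorph_eq0 gt_eqF ?rzf_denom_gt0.
Qed.

Lemma JMSE_vec2 (u : R[i]) :
  JMSE s0 s1 sn c1 h0 h1 (vec2 u 1)
  = s1 ^+ 2 * sqmod (c%:C * u + z^*)%C + sn ^+ 2 * (sqmod u + 1).
Proof.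
by case: z c1 u => ? ? [? ?] [? ?]; unfold_model; rewrite /sqmod; simp_parts; ring.
Qed.

Lemma MSE_model (lam : R) : 0 <= lam ->
  let a := s1 ^+ 2 + lam in let D := a * c ^+ 2 + sn ^+ 2 in
  MSE s0 s1 sn c1 h0 h1 lam
  = (s1 ^+ 2 * (sn ^+ 4 * sqmod z - 2 * sn ^+ 2 * c ^+ 2 * Re (c1 * z) + c ^+ 4 * sqmod c1)
     + sn ^+ 2 * c ^+ 2 * (a ^+ 2 * sqmod z + 2 * a * Re (c1 * z) + sqmod c1)) / D ^+ 2
    + sn ^+ 2.
Proof.
move=> lam_ge0 a D; rewrite /MSE wRZF_model // JMSE_vec2.
have D_neq0 : D != 0 by rewrite gt_eqF ?rzf_denom_gt0.
case: z c1 D_neq0 => ? ? [? ?] D_neq0; rewrite /sqmod; simp_parts.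
by rewrite expr0n addr0 /D /a; field.
Qed.

End RZFModel.

Section TwoSensorModel.
Variables (R : realType) (tau phiz sig0 sig1 sign r phic : R).
Hypotheses (cos_gt0 : 0 < cos tau) (sign_gt0 : 0 < sign).
Hypotheses (r_ge0 : 0 <= r) (r_le : r <= sig0 * sig1).
Local Notation c1 := (r%:C * expi phic)%C.
Local Notation mse := (MSE sig0 sig1 sign c1 (vec2 0 1)
                           (vec2 (cos tau)%:C%C ((sin tau)%:C * expi phiz)%C)).
Local Notation delta1 := (sign ^+ 2 * tan tau - r * cos tau * cos (phic + phiz)).
Local Notation delta2 :=
  ((sign ^+ 2 * tan tau)%:C - (r * cos tau)%:C * expi (phic + phiz))%C.
Local Notation g0 := (sig1 ^+ 2 * cos tau ^+ 2 + sign ^+ 2).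
Local Notation C := (sign ^+ 2 * (tan tau ^+ 2 + 1)).

Lemma sqmod_c1_le : sqmod c1 <= (sig0 * sig1) ^+ 2.
Proof. by rewrite sqmod_real_expi ler_pXn2r ?nnegrE // (le_trans r_ge0). Qed.

Lemma Re_delta2 : Re delta2 = delta1.
Proof. by rewrite Re_add Re_opp Re_real_expi. Qed.

Lemma MSE_closed_form (lam : R) : 0 <= lam ->
  let g := lam * cos tau ^+ 2 + sig1 ^+ 2 * cos tau ^+ 2 + sign ^+ 2 in
  mse lam = sqmod delta2 * g0 / g ^+ 2 - 2 * sign ^+ 2 * delta1 * tan tau / g + C.
Proof.
move=> lam_ge0 g.
have g_gt0 : 0 < g by rewrite /g -mulrDl (addrC lam); apply: rzf_denom_gt0.
have c1z : (r%:C * expi phic * ((sin tau)%:C * expi phiz))%C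
           = ((r * sin tau)%:C * expi (phic + phiz))%C.
  by rewrite mulrACA -rmorphM expiD.
rewrite MSE_model ?sqmod_c1_le // c1z Re_real_expi !sqmod_real_expi sqmod_sub_real_expi.
rewrite /g /tan; field.
by rewrite exprMn !gt_eqF.
Qed.

Lemma MSE_delta2_eq0 : delta2 = 0 -> forall lam : R, 0 <= lam -> mse lam = C.
Proof.
move=> delta2_0 lam lam_ge0; have delta1_0 : delta1 = 0 by rewrite -Re_delta2 delta2_0.
rewrite MSE_closed_form // delta2_0 delta1_0 /sqmod /= !expr2.
by rewrite !(mul0r, mulr0, oppr0, addr0, add0r).
Qed.

Hypothesis delta2_neq0 : delta2 != 0.
Local Notation gam := (delta1 * sign ^+ 2 * tan tau / sqmod delta2).

Lemma MSE_profile_form (x : R) : 0 <= x ->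
  mse x = sqmod delta2 * (g0 * (x * cos tau ^+ 2 + g0)^-1 ^+ 2
                          - 2 * gam * (x * cos tau ^+ 2 + g0)^-1) + C.
Proof.
move=> x_ge0; have D2_gt0 : 0 < sqmod delta2 by exact: sqmod_gt0.
have denom_gt0 : 0 < x * cos tau ^+ 2 + g0.
  by rewrite addrA -mulrDl (addrC x); apply: rzf_denom_gt0.
rewrite MSE_closed_form // addrA; field.
by rewrite exprMn -addrA !gt_eqF.
Qed.

Lemma gam_le0E : (gam <= 0) = (delta1 * tan tau <= 0).
Proof.
have -> : gam = delta1 * tan tau * (sign ^+ 2 / sqmod delta2) by ring.
by rewrite pmulr_lle0 // divr_gt0 ?exprn_gt0 ?sqmod_gt0.
Qed.

End TwoSensorModel.

Local Open Scope classical_set_scope.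

Section Profile.
Variables (R : realType) (f : R -> R) (D2 g0 c2 gam C : R).
Hypotheses (D2_gt0 : 0 < D2) (g0_gt0 : 0 < g0) (c2_gt0 : 0 < c2).
Local Notation u x := ((x * c2 + g0)^-1).
Hypothesis fE : forall x : R, 0 <= x -> f x = D2 * (g0 * u x ^+ 2 - 2 * gam * u x) + C.

Lemma profile_denom_gt0 (x : R) : 0 <= x -> 0 < x * c2 + g0.
Proof. by move=> x_ge0; rewrite ltr_wpDl ?mulr_ge0 // ltW. Qed.

Lemma profile_u_gt0 {x : R} : 0 <= x -> 0 < u x.
Proof. by move=> /profile_denom_gt0; rewrite invr_gt0. Qed.

Lemma profile_u_lt {a b : R} : 0 <= a -> a < b -> u b < u a.
Proof.
move=> a_ge0 ab; have b_ge0 : 0 <= b by rewrite (le_trans a_ge0) ?ltW.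
rewrite ltf_pV2 ?posrE ?profile_denom_gt0 //.
by rewrite ltrD2r ltr_pM2r.
Qed.

Lemma profile_u_le {x : R} : 0 <= x -> g0 * u x <= 1.
Proof.
move=> x_ge0; rewrite ler_pdivrMr ?profile_denom_gt0 // mul1r.
by rewrite lerDr mulr_ge0 // ltW.
Qed.

Lemma profile_sub (a b : R) : 0 <= a -> 0 <= b ->
  f a - f b = D2 * (u a - u b) * (g0 * (u a + u b) - 2 * gam).
Proof. by move=> a_ge0 b_ge0; rewrite !fE //; ring. Qed.

Lemma profile_decreasing : gam <= 0 ->
  forall a b : R, 0 <= a -> a < b -> f b < f a.
Proof.
move=> gam_le0 a b a_ge0 ab; have b_ge0 : 0 <= b by rewrite (le_trans a_ge0) ?ltW.
rewrite -subr_gt0 profile_sub //; apply: mulr_gt0; first apply: mulr_gt0 => //.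
  by rewrite subr_gt0 profile_u_lt.
have := mulr_gt0 g0_gt0 (addr_gt0 (profile_u_gt0 a_ge0) (profile_u_gt0 b_ge0)).
lra.
Qed.

Lemma profile_increasing : 1 <= gam ->
  forall a b : R, 0 <= a -> a < b -> f a < f b.
Proof.
move=> gam_ge1 a b a_ge0 ab; have b_ge0 : 0 <= b by rewrite (le_trans a_ge0) ?ltW.
have uba := profile_u_lt a_ge0 ab.
rewrite -subr_gt0.
have -> : f b - f a = D2 * (u a - u b) * (2 * gam - g0 * (u b + u a)).
  by rewrite profile_sub //; ring.
apply: mulr_gt0; first by rewrite mulr_gt0 // subr_gt0.
have : g0 * u b < g0 * u a by rewrite ltr_pM2l.
have := profile_u_le a_ge0; lra.
Qed.

Lemma profile_min_at0 : 1 <= gam -> forall lam : R, 0 <= lam -> f 0 <= f lam.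
Proof.
move=> gam_ge1 lam; rewrite le_eqVlt => /predU1P[<- // | lam_gt0].
exact/ltW/profile_increasing.
Qed.

Lemma profile_argmin : 0 < gam < 1 ->
  let lamstar := g0 / c2 * ((1 - gam) / gam) in
  0 < lamstar /\ forall lam : R, 0 <= lam -> f lamstar <= f lam.
Proof.
move=> /andP[gam_gt0 gam_lt1] lamstar.
have lamstar_gt0 : 0 < lamstar by rewrite /lamstar mulr_gt0 ?divr_gt0 // subr_gt0.
split=> // lam lam_ge0.
have u_lamstar : u lamstar = gam / g0.
  have -> : lamstar * c2 + g0 = g0 / gam.
    by rewrite /lamstar; field; rewrite !gt_eqF.
  by rewrite invf_div.
rewrite -subr_ge0 profile_sub // ?(ltW lamstar_gt0) // u_lamstar.
have -> : D2 * (u lam - gam / g0) * (g0 * (u lam + gam / g0) - 2 * gam)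
          = D2 * g0 * (u lam - gam / g0) ^+ 2.
  by field; rewrite !gt_eqF ?profile_denom_gt0.
by rewrite mulr_ge0 ?sqr_ge0 // mulr_ge0 // ltW.
Qed.

Lemma profile_u_cvg0 : u x @[x --> +oo] --> 0.
Proof.
apply/gtr0_cvgV0.
  near=> x; apply: profile_denom_gt0.
  by near: x; apply: nbhs_pinfty_ge; rewrite num_real.
apply/cvgryPge => A; near=> x.
have Ax : A / c2 <= x by near: x; apply: nbhs_pinfty_ge; rewrite num_real.
rewrite ler_pdivrMr // in Ax; apply: le_trans Ax _.
by rewrite lerDl ltW.
Unshelve. all: by end_near.
Qed.

Lemma profile_cvg : f x @[x --> +oo] --> C.
Proof.
pose p x := D2 * (g0 * (u x * u x) - 2 * gam * u x) + C.
have pf : {near +oo, p =1 f}.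
  near=> x.
  have x_ge0 : 0 <= x by near: x; apply: nbhs_pinfty_ge; rewrite num_real.
  by rewrite /p fE // expr2.
apply: cvg_trans (near_eq_cvg pf) _.
have -> : C = D2 * (g0 * (0 * 0) - 2 * gam * 0) + C by rewrite !(mulr0, oppr0, add0r).
rewrite /p; apply: cvgD _ (cvg_cst C).
apply: cvgMr; apply: cvgB; apply: cvgMr; last exact: profile_u_cvg0.
exact: cvgM profile_u_cvg0 profile_u_cvg0.
Unshelve. all: by end_near.
Qed.

Lemma profile_inf : gam <= 0 -> inf [set f x | x in [set x : R | 0 <= x]] = C.
Proof.
move=> gam_le0; set S := [set f x | x in _].
have f_gt : forall x : R, 0 <= x -> C < f x.
  move=> x x_ge0; rewrite fE // ltrDr; apply: mulr_gt0 => //.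
  have u_gt0 := profile_u_gt0 x_ge0; have := mulr_gt0 g0_gt0 u_gt0; nra.
have lbS : lbound S C by move=> _ [x x_ge0 <-]; exact/ltW/f_gt.
have neS : S !=set0 by exists (f 0); exists 0; rewrite /= ?lexx.
apply/le_anti/andP; split; last exact: lb_le_inf.
apply/ler_addgt0Pr => e e_gt0.
have [x [x_ge0 fx_lt]] : exists x : R, 0 <= x /\ f x < C + e.
  have : \forall x \near +oo, 0 <= x /\ f x < C + e.
    near=> x; split; first by near: x; apply: nbhs_pinfty_ge; rewrite num_real.
    by near: x; apply: cvgr_lt profile_cvg _ _; rewrite ltrDl.
  exact: filter_ex.
apply: le_trans (ltW fx_lt); apply: ge_inf; first by exists C.
by exists x.
Unshelve. all: by end_near.
Qed.

End Profile.

Theorem lemma3 (R : realType) (tau phiz sig0 sig1 sign r phic : R) :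
  0 <= tau < pi / 2 -> 0 <= phiz < 2 * pi ->
  0 < sig0 -> 0 < sig1 -> 0 < sign ->
  0 <= r <= sig0 * sig1 -> 0 <= phic < 2 * pi ->
  let z : R[i] := ((sin tau)%:C * expi phiz)%C in
  let c1 : R[i] := (r%:C * expi phic)%C in
  let h0 : 'cV[R[i]]_(2) := vec2 0 1 in
  let h1 : 'cV[R[i]]_(2) := vec2 ((cos tau)%:C)%C z in
  let w := wRZF sig0 sig1 sign c1 h0 h1 in
  let mse := MSE sig0 sig1 sign c1 h0 h1 in
  let g := fun lam : R => lam * cos tau ^+ 2 + sig1 ^+ 2 * cos tau ^+ 2 + sign ^+ 2 in
  let delta1 : R := sign ^+ 2 * tan tau - r * cos tau * cos (phic + phiz) in
  let delta2 : R[i] :=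
    ((sign ^+ 2 * tan tau)%:C - (r * cos tau)%:C * expi (phic + phiz))%C in
  let gam : R := delta1 * sign ^+ 2 * tan tau / sqmod delta2 in
  (forall lam : R, 0 <= lam ->
     w lam = vec2
       (- (((cos tau)%:C * ((sig1 ^+ 2 + lam)%:C * conjc z + c1))
            / ((sig1 ^+ 2 + lam) * cos tau ^+ 2 + sign ^+ 2)%:C))%C
       1) /\
  (forall lam : R, 0 <= lam ->
     mse lam = sqmod delta2 * (sig1 ^+ 2 * cos tau ^+ 2 + sign ^+ 2) / g lam ^+ 2
               - 2 * sign ^+ 2 * delta1 * tan tau / g lam
               + sign ^+ 2 * (tan tau ^+ 2 + 1)) /\
  (delta2 = 0 ->
     delta1 = 0 /\
     forall lam : R, 0 <= lam -> mse lam = sign ^+ 2 * (tan tau ^+ 2 + 1)) /\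
  (delta2 != 0 ->
     ((gam <= 0) = (delta1 * tan tau <= 0)) /\
     (gam <= 0 ->
        (forall a b : R, 0 <= a -> a < b -> mse b < mse a) /\
        exists L : R, (mse x @[x --> +oo%R] --> L) /\
                      inf [set mse x | x in [set x : R | 0 <= x]] = L) /\
     (1 <= gam ->
        (forall a b : R, 0 <= a -> a < b -> mse a < mse b) /\
        (forall lam : R, 0 <= lam -> mse 0 <= mse lam)) /\
     (0 < gam < 1 ->
        let lamstar : R :=
          (sig1 ^+ 2 * cos tau ^+ 2 + sign ^+ 2) / cos tau ^+ 2 * ((1 - gam) / gam) in
        0 < lamstar /\ (forall lam : R, 0 <= lam -> mse lamstar <= mse lam))).
Proof.
move=> /andP[tau_ge0 tau_lt] _ _ _ sign_gt0 /andP[r_ge0 r_le] _.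
move=> z c1 h0 h1 w mse g delta1 delta2 gam.
have cos_gt0 : 0 < cos tau.
  by apply: cos_gt0_pihalf; rewrite tau_lt andbT (lt_le_trans _ tau_ge0) // oppr_lt0 divr_gt0 ?pi_gt0.
split; first by move=> lam lam_ge0; apply: wRZF_model; rewrite ?sqmod_c1_le.
split; first by move=> lam; apply: MSE_closed_form.
split.
  move=> delta2_0; split; first by rewrite /delta1 -Re_delta2 -/delta2 delta2_0.
  exact: MSE_delta2_eq0.
move=> delta2_neq0; have D2_gt0 : 0 < sqmod delta2 by exact: sqmod_gt0.
have g0_gt0 : 0 < sig1 ^+ 2 * cos tau ^+ 2 + sign ^+ 2.
  by apply: ltr_wpDl; [rewrite mulr_ge0 ?sqr_ge0 | exact: exprn_gt0].
have c2_gt0 : 0 < cos tau ^+ 2 by rewrite exprn_gt0.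
have fE := MSE_profile_form cos_gt0 sign_gt0 r_ge0 r_le delta2_neq0.
split; first exact: gam_le0E.
split.
  move=> gam_le0; split; first exact: (profile_decreasing D2_gt0 g0_gt0 c2_gt0 fE).
  exists (sign ^+ 2 * (tan tau ^+ 2 + 1)); split; first exact: (profile_cvg g0_gt0 c2_gt0 fE).
  exact: (profile_inf D2_gt0 g0_gt0 c2_gt0 fE).
split.
  move=> gam_ge1; split; first exact: (profile_increasing D2_gt0 g0_gt0 c2_gt0 fE).
  exact: (profile_min_at0 D2_gt0 g0_gt0 c2_gt0 fE).
exact: (profile_argmin D2_gt0 g0_gt0 c2_gt0 fE).
Qed.
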